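(* Let $m\ge2$ and let $\tau$ be a labeled rooted tree on vertex set $[1,m]$. Then for all integers $n$ and $l,a\ge1$, $$E_\tau^{(l+a,n)}=\sum_{\mu\in\mathcal M_\tau}\mathcal E_\tau^{\mu}(a;\,n-l\to n).$$
   Context: Fix $\beta\in(0,1)$ and sufficiently smooth losses $L^{(s)}$ (for integer $s<0$ the corresponding terms never occur since sums are empty). $\nabla^kF$ is the $k$-th derivative (symmetric $k$-linear map). Empty sums are $0$. For a rooted tree $\tau$ whose root has children subtrees $\tau_1,\dots,\tau_\ell$ ($\ell\ge0$), integer $n$ and integer $l\ge1$, define recursively $$E_\tau^{(l,n)}(\theta)=\sum_{b=0}^{n-l}\beta^b\nabla^{\ell+1}L^{(n-l-b)}(\theta)\Big[\sum_{l_1=1}^{l+b}E_{\tau_1}^{(l_1,n)}(\theta),\dots,\sum_{l_\ell=1}^{l+b}E_{\tau_\ell}^{(l_\ell,n)}(\theta)\Big]$$ (it depends only on the isomorphism class of $\tau$). A marking $\mu$ of a labeled rooted tree $\tau$ is a set of non-root vertices such that no marked vertex has another marked vertex in its subtree (i.e., no marked vertex is a descendant of another); $\mathcal M_\tau$ is the set of all markings (including $\varnothing$). For a labeled rooted tree $\tau$ with root $r$, children $v_1,\dots,v_\ell$ of $r$, subtrees $\tau_1,\dots,\tau_\ell$ rooted at them with vertex sets $V_1,\dots,V_\ell$, a marking $\mu\in\mathcal M_\tau$, and integers $n$, $l\ge1$, $a\ge1$, define recursively $$\mathcal E_\tau^{\mu}(a;\,n-l\to n)=\sum_{b=0}^{n-l-a}\beta^b\nabla^{\ell+1}L^{(n-l-a-b)}\big[X_1,\dots,X_\ell\big],$$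 where $X_s=\sum_{l'=1}^{l}E_{\tau_s}^{(l',n)}$ if $v_s\in\mu$, and $X_s=\sum_{l'=1}^{a+b}\mathcal E_{\tau_s}^{\mu\cap V_s}(l';\,n-l\to n)$ if $v_s\notin\mu$. (For a single-vertex tree and $\mu=\varnothing$ this gives $\sum_{b=0}^{n-l-a}\beta^b\nabla L^{(n-l-a-b)}$.) *)

From HB Require Import structures.
From mathcomp Require Import all_boot all_order all_algebra.
Set Implicit Arguments. Unset Strict Implicit. Unset Printing Implicit Defensive.
Import Order.TTheory GRing.Theory Num.Theory.
Local Open Scope ring_scope.

Inductive tree : Type := Node of nat & seq tree.

Definition root (t : tree) : nat := let: Node x _ := t in x.
Definition children (t : tree) : seq tree := let: Node _ ts := t in ts.

Fixpoint labels (t : tree) : seq nat :=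
  let: Node x ts := t in x :: flatten (map labels ts).

Fixpoint subtrees (t : tree) : seq tree :=
  let: Node _ ts := t in t :: flatten (map subtrees ts).

Definition nonroot_labels (t : tree) : seq nat :=
  flatten (map labels (children t)).

Definition desc (t : tree) (x : nat) : seq nat :=
  flatten [seq nonroot_labels s | s <- subtrees t & root s == x].

Definition wf_tree (m : nat) (t : tree) : bool := perm_eq (labels t) (iota 1 m).

Definition is_marking (k : nat) (t : tree) (mu : {set 'I_k}) : bool :=
  [forall i in mu, (val i \in nonroot_labels t) &&
     [forall j in mu, val j \notin desc t (val i)]].

(* number of terms of the sum  sum_{b=0}^{N}  (zero if N < 0) *)
Definition nterms (N : int) : nat := if (0 <= N)%R then (`|N|%N).+1 else 0%N.

(* D s theta xs  stands for  nabla^{size xs + 1} L^{(s)}(theta) [xs]  *)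
Section Defs.
Variables (R : realFieldType) (V : lmodType R).

Fixpoint E (beta : R) (D : int -> V -> seq V -> V) (theta : V)
    (t : tree) (l : nat) (n : int) : V :=
  let: Node _ ts := t in
  \sum_(b < nterms (n - l%:Z))
     beta ^+ b *: D (n - l%:Z - b%:Z) theta
       (map (fun s => \sum_(1 <= l1 < (l + b).+1) E beta D theta s l1 n) ts).

Fixpoint calE (beta : R) (D : int -> V -> seq V -> V) (theta : V)
    (k : nat) (t : tree) (mu : {set 'I_k}) (a l : nat) (n : int) : V :=
  let: Node _ ts := t in
  \sum_(b < nterms (n - l%:Z - a%:Z))
     beta ^+ b *: D (n - l%:Z - a%:Z - b%:Z) theta
       (map (fun s =>
          if [exists i in mu, val i == root s]
          then \sum_(1 <= l1 < l.+1) E beta D theta s l1 n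
          else \sum_(1 <= l1 < (a + b).+1)
                 calE beta D theta s (mu :&: [set i | val i \in labels s]) l1 l n)
         ts).
End Defs.

Definition multilinear (R : realFieldType) (V : lmodType R)
    (D : int -> V -> seq V -> V) : Prop :=
  forall (s : int) (theta : V) (xs ys : seq V) (x y : V) (c : R),
    D s theta (xs ++ (x + y) :: ys) = D s theta (xs ++ x :: ys) + D s theta (xs ++ y :: ys)
    /\ D s theta (xs ++ (c *: x) :: ys) = c *: D s theta (xs ++ x :: ys).

Definition symmetric_args (R : realFieldType) (V : lmodType R)
    (D : int -> V -> seq V -> V) : Prop :=
  forall (s : int) (theta : V) (xs ys : seq V), perm_eq xs ys -> D s theta xs = D s theta ys.

From Pilot Require Import Defs.
From HB Require Import structures.
From mathcomp Require Import all_boot all_order all_algebra.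
Import GRing.Theory.
Set Implicit Arguments. Unset Strict Implicit. Unset Printing Implicit Defensive.
Local Open Scope ring_scope.

(* For fixed b, the argument of the root derivative in E_tau^(l+a) attached to a
   child tau_s is sum_{l1=1}^{l+a+b} E_{tau_s}^(l1).  Split it at l: the head
   sum_{l1<=l} is the contribution of tau_s when its root is marked, and by
   induction each tail term E_{tau_s}^(l+l') is the sum over the markings of
   tau_s of calE_{tau_s}(l').  Multilinearity of the derivative expands the
   product of these per-child sums into a single sum over the choices "root of
   tau_s marked, or a marking of tau_s" for every child, and these choices are
   exactly the markings of tau. *)

Local Notation root := Defs.root.

Fixpoint tree_to_gentree (t : tree) : GenTree.tree nat :=
  let: Node x ts := t in GenTree.Node x (map tree_to_gentree ts).

Fixpoint gentree_to_tree (g : GenTree.tree nat) : tree :=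
  match g with
  | GenTree.Leaf x => Node x [::]
  | GenTree.Node x gs => Node x (map gentree_to_tree gs)
  end.

Lemma tree_to_gentreeK : cancel tree_to_gentree gentree_to_tree.
Proof.
rewrite /cancel; fix IH 1 => -[x ts] /=; congr Node.
by elim: ts => //= s ts ->; rewrite IH.
Qed.

HB.instance Definition _ := Equality.copy tree (can_type tree_to_gentreeK).

Lemma tree_ind_mem (P : tree -> Prop) :
  (forall x ts, {in ts, forall s, P s} -> P (Node x ts)) -> forall t, P t.
Proof.
move=> IH; fix F 1 => -[x ts]; apply: IH.
(* the recursive call must be made on the head [s] itself to pass the guard *)
elim: ts => [s' | s ts IHts]; first by rewrite in_nil => /notF [].
have Ps := F s.
by move=> s'; rewrite inE => /predU1P[-> | /IHts].
Qed.

Lemma root_in_labels s : root s \in labels s.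
Proof. by case: s => x ts; rewrite /= inE eqxx. Qed.

Lemma labels_rootVnonroot s y :
  y \in labels s -> (y == root s) || (y \in nonroot_labels s).
Proof. by case: s => x ts; rewrite /= inE. Qed.

Lemma uniq_labels_child ts s :
  uniq (flatten (map labels ts)) -> s \in ts -> uniq (labels s).
Proof.
elim: ts => //= s' ts IH; rewrite cat_uniq inE => /and3P[Us' _ Uts].
by case/predU1P => [-> // | /IH]; apply.
Qed.

Lemma desc_Node x ts y : desc (Node x ts) y =
  (if x == y then flatten (map labels ts) else [::])
    ++ flatten [seq desc s y | s <- ts].
Proof.
have desc_forest ss : flatten [seq nonroot_labels s |
    s <- flatten (map subtrees ss) & root s == y] = flatten [seq desc s y | s <- ss].
  by elim: ss => //= s ss IH; rewrite filter_cat map_cat flatten_cat IH.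
by rewrite {1}/desc /=; case: (x == y); rewrite /= desc_forest.
Qed.

Lemma desc_labels s y j : j \in desc s y -> (y \in labels s) && (j \in labels s).
Proof.
elim/tree_ind_mem: s => x ts IH; rewrite desc_Node mem_cat => /orP[|].
  by case: eqP => // <- jts; rewrite /= !inE eqxx jts orbT.
case/flatten_mapP => s sts /(IH s sts) /andP[ys js].
by rewrite /= !inE; apply/andP; split; apply/orP; right; apply/flatten_mapP; exists s.
Qed.

Lemma nonroot_desc_root s j : j \in nonroot_labels s -> j \in desc s (root s).
Proof. by case: s => x ts jn; rewrite desc_Node eqxx mem_cat jn. Qed.

Lemma desc_child x ts s y j :
  s \in ts -> j \in desc s y -> j \in desc (Node x ts) y.
Proof.
by move=> sts jd; rewrite desc_Node mem_cat; apply/orP; right;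
  apply/flatten_mapP; exists s.
Qed.

Lemma root_notin_desc s : uniq (labels s) -> root s \notin desc s (root s).
Proof.
case: s => r ss /= /andP[rn _]; rewrite desc_Node eqxx mem_cat negb_or rn /=.
apply/flatten_mapP => -[s' s'ss /desc_labels /andP[rs' _]].
by apply: (negP rn); apply/flatten_mapP; exists s'.
Qed.

Section Markings.
Variable k : nat.

Definition vset (s : tree) : {set 'I_k} := [set i | val i \in labels s].
Definition forest_vset (ts : seq tree) : {set 'I_k} :=
  [set i | val i \in flatten (map labels ts)].
Definition root_set (s : tree) : {set 'I_k} := [set i | val i == root s].

(* the possible traces on a child [s] of a marking of its parent's tree *)
Definition child_marking (s : tree) (nu : {set 'I_k}) : bool :=
  (nu == root_set s) || is_marking s nu.

Definition forest_marking (O : tree -> {set 'I_k} -> bool) (ts : seq tree)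
    (mu : {set 'I_k}) : bool :=
  (mu \subset forest_vset ts) && all (fun s => O s (mu :&: vset s)) ts.

Lemma vset_sub_forest_vset ts s : s \in ts -> vset s \subset forest_vset ts.
Proof.
by move=> sts; apply/subsetP => i; rewrite !inE => il; apply/flatten_mapP; exists s.
Qed.

Lemma forest_vset_cons s ts : forest_vset (s :: ts) = vset s :|: forest_vset ts.
Proof. by apply/setP => i; rewrite !inE mem_cat. Qed.

Lemma child_marking_sub s nu : child_marking s nu -> nu \subset vset s.
Proof.
case/orP=> [/eqP -> | /forall_inP M]; apply/subsetP => i; rewrite !inE.
  by move/eqP => ->; apply: root_in_labels.
by case/M/andP => nr _; case: s nr {M} => y ss nr; rewrite /= inE nr orbT.
Qed.

Lemma forest_marking_of_marking x ts (mu : {set 'I_k}) :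
  is_marking (Node x ts) mu -> forest_marking child_marking ts mu.
Proof.
move=> /forall_inP Hmu; apply/andP; split.
  by apply/subsetP => i /Hmu /andP[]; rewrite inE.
apply/allP => s sts; rewrite /child_marking.
case: (boolP [exists i in mu, val i == root s]) =>
    [/exists_inP[i0 i0mu /eqP i0r] | nex].
  (* the root of [s] is marked, so no other vertex of [s] may be *)
  apply/orP; left; apply/eqP/setP => j; rewrite !inE.
  apply/andP/eqP => [[jmu jl] | jr].
    apply/eqP/negP => /negP jr; have := labels_rootVnonroot jl.
    rewrite (negPf jr) /= => /nonroot_desc_root jd.
    case/andP: (Hmu i0 i0mu) => _ /forall_inP /(_ j jmu) /negP; apply.
    by rewrite i0r; apply: desc_child jd.
  have -> : j = i0 by apply: val_inj; rewrite jr i0r.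
  by rewrite i0mu i0r root_in_labels.
apply/orP; right; apply/forall_inP => i; rewrite !inE => /andP[imu il].
have nr : val i \in nonroot_labels s.
  have := labels_rootVnonroot il; case: eqP => //= ir _; case/negP: nex.
  by apply/exists_inP; exists i => //; apply/eqP.
rewrite nr; apply/forall_inP => j; rewrite inE => /andP[jmu _].
apply/negP => jd; case/andP: (Hmu i imu) => _ /forall_inP /(_ j jmu) /negP.
by apply; apply: desc_child jd.
Qed.

Lemma marking_of_forest_marking x ts (mu : {set 'I_k}) :
  uniq (labels (Node x ts)) ->
  forest_marking child_marking ts mu -> is_marking (Node x ts) mu.
Proof.
move=> /= /andP[xts Uts] /andP[/subsetP Hsub /allP Hall].
apply/forall_inP => i imu.
have inr : val i \in nonroot_labels (Node x ts) by have := Hsub i imu; rewrite inE.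
rewrite inr; apply/forall_inP => j jmu; apply/negP; rewrite desc_Node mem_cat.
case/orP => [| /flatten_mapP[s sts jd]].
  by case: eqP => // xi; move: xts; rewrite xi inr.
have /andP[il jl] := desc_labels jd.
have imus : i \in mu :&: vset s by rewrite !inE imu il.
have jmus : j \in mu :&: vset s by rewrite !inE jmu jl.
case/orP: (Hall s sts) => [/eqP E | /forall_inP /(_ i imus) /andP[_]].
  move: imus jmus jd; rewrite E !inE => /eqP -> /eqP ->; apply/negP.
  by apply: root_notin_desc; apply: uniq_labels_child Uts sts.
by move/forall_inP/(_ j jmus)/negP.
Qed.

Lemma is_marking_Node x ts (mu : {set 'I_k}) : uniq (labels (Node x ts)) ->
  is_marking (Node x ts) mu = forest_marking child_marking ts mu.
Proof.
move=> U; apply/idP/idP;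
  [exact: forest_marking_of_marking | exact: marking_of_forest_marking].
Qed.

Lemma setUI_disjoint (A B nu rho : {set 'I_k}) : [disjoint A & B] ->
  nu \subset A -> rho \subset B -> (nu :|: rho) :&: A = nu.
Proof.
move=> dAB nuA rhoB; rewrite setIUl (setIidPl nuA).
suff -> : rho :&: A = set0 by rewrite setU0.
apply/eqP; rewrite -subset0 -(disjoint_setI0 dAB) setIC.
exact: setIS.
Qed.

Lemma big_disjoint_setU (W : nmodType) (A B : {set 'I_k})
    (P Q : pred {set 'I_k}) (h : {set 'I_k} -> W) : [disjoint A & B] ->
  (forall nu, P nu -> nu \subset A) -> (forall rho, Q rho -> rho \subset B) ->
  \sum_(mu : {set 'I_k} | [&& mu \subset A :|: B, P (mu :&: A) & Q (mu :&: B)])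
     h mu =
  \sum_(nu : {set 'I_k} | P nu) \sum_(rho : {set 'I_k} | Q rho) h (nu :|: rho).
Proof.
move=> dAB PA QB; rewrite pair_big_dep /=.
rewrite (reindex_onto (fun p : {set 'I_k} * {set 'I_k} => p.1 :|: p.2)
   (fun mu => (mu :&: A, mu :&: B))) /=; last first.
  by move=> mu /and3P[/setIidPl muAB _ _]; rewrite -setIUr.
apply: eq_bigl => -[nu rho] /=; apply/idP/idP.
  case/andP=> /and3P[_ Pnu Qrho] /eqP[eA eB].
  by move: Pnu Qrho; rewrite eA eB => -> ->.
case/andP=> Pnu Qrho; have nuA := PA _ Pnu; have rhoB := QB _ Qrho.
rewrite (setUI_disjoint dAB nuA rhoB) setUC.
rewrite disjoint_sym in dAB; rewrite (setUI_disjoint dAB rhoB nuA) setUC.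
by rewrite Pnu Qrho eqxx setUSS.
Qed.

Lemma exists_root_setI s (mu : {set 'I_k}) :
  [exists i in mu :&: vset s, val i == root s] = [exists i in mu, val i == root s].
Proof.
apply/exists_inP/exists_inP => -[i imu /eqP ir]; exists i; rewrite ?ir //.
  by case/setIP: imu.
by rewrite !inE imu ir root_in_labels.
Qed.

End Markings.

Section Expansion.
Variables (R : realFieldType) (V : lmodType R) (D : int -> V -> seq V -> V).
Hypothesis hlin : multilinear D.
Variables (N : int) (theta : V) (k : nat).

Lemma multilinear_sum xs ys (I : Type) (r : seq I) (P : pred I) (F : I -> V) :
  D N theta (xs ++ (\sum_(i <- r | P i) F i) :: ys) =
  \sum_(i <- r | P i) D N theta (xs ++ F i :: ys).
Proof.
apply: (big_morph (fun x => D N theta (xs ++ x :: ys))).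
  by move=> x y; apply: (hlin N theta xs ys x y 0).1.
by have := (hlin N theta xs ys 0 0 0).2; rewrite !scale0r.
Qed.

Lemma multilinear_forest_expand (O : tree -> {set 'I_k} -> bool)
    (f : tree -> {set 'I_k} -> V) :
  (forall s nu, O s nu -> nu \subset vset k s) ->
  forall ts xs, uniq (flatten (map labels ts)) ->
  D N theta (xs ++ map (fun s => \sum_(nu : {set 'I_k} | O s nu) f s nu) ts) =
  \sum_(mu : {set 'I_k} | forest_marking O ts mu)
     D N theta (xs ++ map (fun s => f s (mu :&: vset k s)) ts).
Proof.
move=> OL; elim=> [|s ts IH] xs /=.
  move=> _; rewrite (big_pred1 set0) //= => mu; rewrite /forest_marking andbT.
  by rewrite subset0; congr (_ == _); apply/setP => i; rewrite !inE.
rewrite cat_uniq => /and3P[_ dis Uts].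
have dsts : [disjoint vset k s & forest_vset k ts].
  rewrite disjoint_subset; apply/subsetP => i; rewrite !inE => il.
  by apply/negP => iu; case/hasP: dis; exists (val i).
rewrite multilinear_sum.
under [LHS]eq_bigr do rewrite -cat_rcons IH //.
rewrite [RHS](eq_bigl (fun mu : {set 'I_k} =>
    [&& mu \subset vset k s :|: forest_vset k ts, O s (mu :&: vset k s)
      & forest_marking O ts (mu :&: forest_vset k ts)])).
  rewrite (big_disjoint_setU _ dsts (OL s)); last by move=> rho /andP[].
  apply: eq_bigr => nu Onu; apply: eq_bigr => rho /andP[rhoU _].
  rewrite cat_rcons (setUI_disjoint dsts (OL _ _ Onu) rhoU).
  congr (D N theta (xs ++ _ :: _)); apply/eq_in_map => s' s'ts /=.
  suff nu0 : nu :&: vset k s' = set0 by rewrite setIUl nu0 set0U.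
  apply/eqP; rewrite -subset0 -(disjoint_setI0 dsts).
  by apply: setISS; [apply: OL | apply: vset_sub_forest_vset].
move=> mu; rewrite /forest_marking /= subsetIr forest_vset_cons.
congr [&& _, _ & _]; apply: eq_in_all => s' s'ts.
by rewrite -setIA (setIidPr (vset_sub_forest_vset k s'ts)).
Qed.

End Expansion.

Lemma big_nat1_addn (W : nmodType) (F : nat -> W) (p q : nat) :
  \sum_(1 <= i < (p + q).+1) F i =
  \sum_(1 <= i < p.+1) F i + \sum_(1 <= i < q.+1) F (p + i).
Proof.
rewrite (big_cat_nat _ (n := p.+1)) //= ?ltnS ?leq_addr //; congr (_ + _).
rewrite -{1}[p.+1]add1n big_addn -addnS addKn.
by apply: eq_bigr => i _; rewrite addnC.
Qed.

Section Recursion.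
Variables (R : realFieldType) (V : lmodType R) (beta : R).
Variables (D : int -> V -> seq V -> V) (theta : V) (k l : nat) (n : int).
Hypothesis hlin : multilinear D.

(* the argument X_s in the definition of calE, as a function of the trace [nu]
   of the marking on the child [s] *)
Definition child_term (c : nat) (s : tree) (nu : {set 'I_k}) : V :=
  if [exists i in nu, val i == root s]
  then \sum_(1 <= l1 < l.+1) E beta D theta s l1 n
  else \sum_(1 <= l1 < c.+1) calE beta D theta s nu l1 l n.

Lemma sum_E_child_terms s : (root s < k)%N -> uniq (labels s) ->
  (forall a, E beta D theta s (l + a) n =
     \sum_(mu : {set 'I_k} | is_marking s mu) calE beta D theta s mu a l n) ->
  forall c, \sum_(1 <= l1 < (l + c).+1) E beta D theta s l1 n =
    \sum_(nu : {set 'I_k} | child_marking s nu) child_term c s nu.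
Proof.
move=> rk Us IHs c; set r := Ordinal rk.
have rn : root s \notin nonroot_labels s by case: (s) Us => y ss /= /andP[].
have no_root nu : is_marking s nu -> [exists i in nu, val i == root s] = false.
  move=> /forall_inP M; apply/negbTE/exists_inP => -[i /M/andP[inr _] /eqP ir].
  by rewrite -ir inr in rn.
rewrite (bigD1 (root_set k s)) /=; last by rewrite /child_marking eqxx.
rewrite big_nat1_addn /child_term; congr (_ + _).
  by case: exists_inP => // -[]; exists r; rewrite ?inE.
rewrite (eq_bigl (is_marking s)) => [|nu]; last first.
  rewrite /child_marking; case: eqP => [-> | _] /=; last by rewrite andbT.
  apply/esym/negbTE; apply: contra rn => /forall_inP/(_ r).
  by rewrite inE eqxx => /(_ isT)/andP[].
rewrite (eq_bigr (fun nu => \sum_(1 <= l1 < c.+1) calE beta D theta s nu l1 l n));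
  last by move=> nu /no_root ->.
by rewrite exchange_big /=; apply: eq_bigr => l' _; rewrite IHs.
Qed.

Lemma E_shift_sum_markings t : uniq (labels t) ->
  {in labels t, forall y, (y < k)%N} -> forall a,
  E beta D theta t (l + a) n =
  \sum_(mu : {set 'I_k} | is_marking t mu) calE beta D theta t mu a l n.
Proof.
elim/tree_ind_mem: t => x ts IH U Lk a.
have Uts : uniq (flatten (map labels ts)) by case/andP: U.
rewrite /= [RHS]exchange_big /= PoszD opprD addrA.
apply: eq_bigr => b _; rewrite -scaler_sumr; congr (_ *: _).
rewrite (eq_bigl (forest_marking (@child_marking k) ts)) => [|mu]; last first.
  exact: is_marking_Node.
under [RHS]eq_bigr => mu _.
  rewrite -[map _ ts]cat0s
    (eq_map (g := fun s => child_term (a + b) s (mu :&: vset k s))); last first.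
    by move=> s; rewrite /child_term exists_root_setI.
  over.
rewrite -multilinear_forest_expand //; last exact: child_marking_sub.
congr (D _ theta _); apply/eq_in_map => s sts.
have Ls : {in labels s, forall y, (y < k)%N}.
  move=> y ys; apply: Lk; rewrite /= inE; apply/orP; right.
  by apply/flatten_mapP; exists s.
have Us := uniq_labels_child Uts sts.
rewrite -addnA; apply: sum_E_child_terms => //; first exact/Ls/root_in_labels.
exact: IH.
Qed.

End Recursion.

Unset Implicit Arguments.
Theorem mainTheorem6 (R : realFieldType) (V : lmodType R) (beta : R)
    (D : int -> V -> seq V -> V)
    (hbeta : 0 < beta < 1)
    (hlin : multilinear D) (hsym : symmetric_args D)
    (m : nat) (t : tree) (hm : (2 <= m)%N) (ht : wf_tree m t)
    (theta : V) (n : int) (l a : nat) (hl : (1 <= l)%N) (ha : (1 <= a)%N) :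
  E beta D theta t (l + a) n =
  \sum_(mu : {set 'I_m.+1} | is_marking t mu) calE beta D theta t mu a l n.
Proof.
apply: E_shift_sum_markings => //; first by rewrite (perm_uniq ht) iota_uniq.
by move=> y; rewrite (perm_mem ht) mem_iota add1n => /andP[].
Qed.
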